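(* Let $\mathrm{Aut}(K_{C^3(m)^*})$ be the group of permutations of $\{1,\ldots,m\}$ preserving the simplicial complex $K_{C^3(m)^*}$. If $m>5$, this group is generated by $\sigma\colon i\mapsto m+1-i$ and the transposition $\tau=(1\ m)$. If $m=5$, it is generated by the permutation $1\mapsto3,\,2\mapsto4,\,3\mapsto5,\,4\mapsto2,\,5\mapsto1$ and the transposition $(1\ 5)$.
   Context: For a simple polytope $P$ with facets $F_1,\ldots,F_m$, $K_P$ is the simplicial complex on $\{1,\ldots,m\}$ with $\{i_1,\ldots,i_k\}\in K_P$ iff $F_{i_1}\cap\cdots\cap F_{i_k}\neq\emptyset$. $C^3(m)^*$ is the dual of the cyclic $3$-polytope with $m$ vertices, with facets labeled so that the maximal faces of $K_{C^3(m)^*}$ are exactly $\{1,i,i+1\}$ for $i=2,\ldots,m-1$ and $\{i,i+1,m\}$ for $i=1,\ldots,m-2$. *)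

From mathcomp Require Import all_boot all_fingroup.


(* Vertices/facets {1,...,m} are represented by 'I_m: the element x : 'I_m
   stands for the label x.+1 (so labels run over 1..m). *)

Definition maxfaces (m : nat) : seq (seq nat) :=
  [seq [:: 1; i; i.+1] | i <- iota 2 (m - 2)] ++
  [seq [:: i; i.+1; m] | i <- iota 1 (m - 2)].

Definition inK (m : nat) (A : {set 'I_m}) : bool :=
  has (fun F => [forall x in A, (val x).+1 \in F]) (maxfaces m).

Definition AutK (m : nat) : {set {perm 'I_m}} :=
  [set s : {perm 'I_m} | [forall A : {set 'I_m}, inK m (s @: A) == inK m A]].

Definition perm_of_lab (m : nat) (f : nat -> nat) : {set {perm 'I_m}} :=
  [set s : {perm 'I_m} | [forall x : 'I_m, (s x).+1 == f x.+1]].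

Definition sigma_lab (m : nat) (i : nat) : nat := m.+1 - i.
Definition tau_lab (m : nat) (i : nat) : nat :=
  if i == 1 then m else if i == m then 1 else i.
Definition rho5_lab (i : nat) : nat :=
  match i with 1 => 3 | 2 => 4 | 3 => 5 | 4 => 2 | 5 => 1 | _ => i end.

From mathcomp Require Import all_boot all_fingroup zify.

(* Two vertices of K span an edge iff one of them is 1 or m or they are
   consecutive, so an automorphism of K is an automorphism of this graph: two
   joined apexes 1 and m over the path 2 - 3 - ... - (m-1).  For m > 5 the
   apexes are the only vertices adjacent to all others, so an automorphism
   permutes {1, m}; composing with tau we may assume it fixes 1 and m, and then
   it induces an automorphism of the path, sending 2 to 2 or to m-1.  Composing
   with sigma tau in the second case, it fixes 1, 2 and m, hence the whole path.
   For m = 5 the vertex 3 is adjacent to everything as well, and suitable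
   products of rho and tau move any automorphism to one fixing 1, 3, 5 and 2,
   which is again the identity.  Conversely sigma, tau and rho map maximal
   faces to maximal faces, hence lie in Aut(K). *)

Set Implicit Arguments.
Unset Strict Implicit.
Unset Printing Implicit Defensive.

(* The edge graph of K on the vertices 0..n, i.e. on the labels 1..n+1. *)
Definition skel_edge (n a b : nat) : bool :=
  (a != b) && [|| a == 0, b == 0, a == n, b == n, a == b.+1 | b == a.+1].

Lemma skel_edgeC n a b : skel_edge n a b = skel_edge n b a.
Proof. by apply/idP/idP; rewrite /skel_edge; lia. Qed.

Variant maxfaces_spec m : seq nat -> Prop :=
  | MaxFaceLow i of 2 <= i < m : maxfaces_spec m [:: 1; i; i.+1]
  | MaxFaceHigh i of 1 <= i < m.-1 : maxfaces_spec m [:: i; i.+1; m].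

Lemma maxfacesP m F : F \in maxfaces m -> maxfaces_spec m F.
Proof.
rewrite mem_cat => /orP[] /mapP[i]; rewrite mem_iota => i_range ->.
  by apply: MaxFaceLow; lia.
by apply: MaxFaceHigh; lia.
Qed.

Lemma maxfaces_low m i : 2 <= i < m -> [:: 1; i; i.+1] \in maxfaces m.
Proof. by move=> i_range; rewrite mem_cat map_f // mem_iota; lia. Qed.

Lemma maxfaces_high m i : 1 <= i < m.-1 -> [:: i; i.+1; m] \in maxfaces m.
Proof. by move=> i_range; rewrite mem_cat map_f ?orbT // mem_iota; lia. Qed.

Lemma skel_edge_face n a b : 1 < n -> a < b <= n -> skel_edge n a b ->
  exists2 F, F \in maxfaces n.+1 & (a.+1 \in F) && (b.+1 \in F).
Proof.
move=> n_gt1 /andP[ab b_le] ab_edge.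
have [a0|a_gt0] := posnP a.
  have [b_lt|b_n] := ltnP b n.
    by exists [:: 1; b.+1; b.+2]; [apply: maxfaces_low | rewrite !inE]; lia.
  by exists [:: 1; 2; n.+1]; [apply: maxfaces_high | rewrite !inE]; lia.
have [b_lt|b_n] := ltnP b n.
  exists [:: 1; a.+1; a.+2]; first by apply: maxfaces_low; lia.
  by move: ab_edge; rewrite /skel_edge !inE; lia.
have [a_lt|a_n] := ltnP a.+1 n.
  by exists [:: a.+1; a.+2; n.+1]; [apply: maxfaces_high | rewrite !inE]; lia.
by exists [:: 1; n; n.+1]; [apply: maxfaces_low | rewrite !inE]; lia.
Qed.

Lemma has_face_pair n a b : 1 < n -> a <= n -> b <= n -> a != b ->
  has (fun F => (a.+1 \in F) && (b.+1 \in F)) (maxfaces n.+1) = skel_edge n a b.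
Proof.
move=> n_gt1; wlog ab : a b / a < b => [sym a_le b_le|a_le b_le _].
  rewrite neq_ltn => /orP[ab|ba]; first by rewrite sym ?ltn_eqF.
  rewrite skel_edgeC -sym ?(ltn_eqF ba) //.
  by apply: eq_has => F; rewrite andbC.
apply/hasP/idP => [[F /maxfacesP[i i_range|i i_range]] /andP[]|].
- by rewrite /skel_edge !inE; lia.
- by rewrite /skel_edge !inE; lia.
by case/(skel_edge_face n_gt1) => [|F]; [rewrite ab | exists F].
Qed.

Lemma inK_pair n (x y : 'I_n.+1) : 1 < n -> x != y ->
  inK n.+1 [set x; y] = skel_edge n x y.
Proof.
move=> n_gt1 xy; rewrite /inK -has_face_pair ?leq_ord //; apply: eq_has => F.
apply/forallP/andP => [xyF | [xF yF] z].
  by split; [move: (xyF x) | move: (xyF y)]; rewrite !inE eqxx ?orbT.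
by apply/implyP; rewrite !inE => /orP[] /eqP->.
Qed.

Lemma AutK_of_simplex_map m (s : {perm 'I_m}) :
  (forall A, inK m A -> inK m (s @: A)) -> s \in AutK m.
Proof.
move=> sK; rewrite inE; apply/forallP => A; apply/eqP.
apply/idP/idP => [KsA|/sK //].
pose S := [set B : {set 'I_m} | inK m B].
have s_inj := imset_inj (@perm_inj _ s).
(* an injective self-map of the finite set of simplices is onto *)
have sS : [set s @: B | B : {set _} in S] = S.
  apply/eqP; rewrite eqEcard card_imset // leqnn andbT.
  by apply/subsetP => _ /imsetP[B + ->]; rewrite !inE; exact: sK.
have : s @: A \in [set s @: B | B : {set _} in S] by rewrite sS inE.
by case/imsetP => B; rewrite inE => KB /s_inj ->.
Qed.

Lemma AutK_group_set m : group_set (AutK m).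
Proof.
apply/andP; split.
  by apply: AutK_of_simplex_map => A; rewrite (eq_imset _ (@perm1 _)) imset_id.
apply/subsetP => _ /mulsgP[s t sK tK ->]; apply: AutK_of_simplex_map => A KA.
move: sK tK; rewrite !inE => /forallP/(_ A)/eqP sA /forallP/(_ (s @: A))/eqP tsA.
by rewrite (eq_imset _ (permM s t)) imset_comp tsA sA.
Qed.

Canonical AutK_group m := Group (AutK_group_set m).

Definition maps_faces m (f : nat -> nat) : bool :=
  all (fun F => has (fun F' => all (fun i => f i \in F') F) (maxfaces m)) (maxfaces m).

Lemma AutK_of_maps_faces m f (s : {perm 'I_m}) :
  maps_faces m f -> s \in perm_of_lab m f -> s \in AutK m.
Proof.
move=> /allP f_faces; rewrite inE => /forallP sf; apply: AutK_of_simplex_map => A.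
case/hasP=> F /f_faces/hasP[F' F'_face /allP fF] /forallP AF.
apply/hasP; exists F' => //; apply/forallP => y; apply/implyP => /imsetP[x Ax ->].
by rewrite (eqP (sf x)); apply: fF; exact: implyP (AF x) Ax.
Qed.

Lemma gen_sub_AutK m f g : maps_faces m f -> maps_faces m g ->
  <<perm_of_lab m f :|: perm_of_lab m g>>%g \subset AutK m.
Proof.
move=> f_faces g_faces; rewrite gen_subG subUset.
by apply/andP; split; apply/subsetP => s; apply: AutK_of_maps_faces.
Qed.

Lemma sigma_maps_faces m : maps_faces m (sigma_lab m).
Proof.
apply/allP => F /maxfacesP[i i_range|i i_range]; apply/hasP.
  exists [:: m - i; (m - i).+1; m]; first by apply: maxfaces_high; lia.
  by apply/allP => a; rewrite /sigma_lab !inE; lia.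
exists [:: 1; m - i; (m - i).+1]; first by apply: maxfaces_low; lia.
by apply/allP => a; rewrite /sigma_lab !inE; lia.
Qed.

Lemma tau_maps_faces m : maps_faces m (tau_lab m).
Proof.
apply/allP => F /maxfacesP[i i_range|i i_range]; apply/hasP.
  exists (if i == m.-1 then [:: 1; i; i.+1] else [:: i; i.+1; m]).
    by case: eqP => i_m; [apply: maxfaces_low | apply: maxfaces_high]; lia.
  by apply/allP => a; rewrite /tau_lab; repeat case: ifP; rewrite !inE; lia.
exists (if i == 1 then [:: i; i.+1; m] else [:: 1; i; i.+1]).
  by case: eqP => i_1; [apply: maxfaces_high | apply: maxfaces_low]; lia.
by apply/allP => a; rewrite /tau_lab; repeat case: ifP; rewrite !inE; lia.
Qed.

Lemma rho5_maps_faces : maps_faces 5 rho5_lab.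
Proof. by []. Qed.

Definition skel_aut n (f : nat -> nat) : Prop :=
  [/\ forall a, a <= n -> f a <= n,
      forall a b, a <= n -> b <= n -> f a = f b -> a = b,
      forall c, c <= n -> exists2 a, a <= n & f a = c &
      forall a b, a <= n -> b <= n -> skel_edge n (f a) (f b) = skel_edge n a b].

Definition universal n c : Prop := forall b, b <= n -> b != c -> skel_edge n c b.

Lemma universal_endpoints n c : 4 < n -> c <= n -> universal n c <-> c \in [:: 0; n].
Proof.
move=> n_gt4 c_le; split => [/(_ (if 2 < c then 1 else n.-1))|c_end b b_le].
  by rewrite /skel_edge !inE; case: ifP; lia.
by move: c_end; rewrite /skel_edge !inE; lia.
Qed.

Lemma universal_even5 c : c <= 4 -> universal 4 c <-> c \in [:: 0; 2; 4].
Proof.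
move=> c_le; split => [/(_ (if c == 1 then 3 else 1))|c_even b b_le].
  by rewrite /skel_edge !inE; case: ifP; lia.
by move: c_even; rewrite /skel_edge !inE; lia.
Qed.

Section SkeletonAutomorphism.

Variables (n : nat) (f : nat -> nat).
Hypothesis f_aut : skel_aut n f.

Lemma universal_map c : c <= n -> universal n c -> universal n (f c).
Proof.
have [_ _ f_onto f_edge] := f_aut.
move=> c_le c_univ _ /f_onto[b b_le <-] fb_c.
rewrite f_edge //; apply: c_univ => //.
by apply: contra_neq fb_c => ->.
Qed.

Lemma second_vertex : 2 < n -> f 0 = 0 -> f n = n -> (f 1 == 1) || (f 1 == n.-1).
Proof.
have [f_le f_inj f_onto f_edge] := f_aut.
move=> n_gt2 f0 fn.
have f1_inner : 0 < f 1 < n.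
  have := f_le 1; have : f 1 <> f 0 by move/f_inj; lia.
  have : f 1 <> f n by move/f_inj; lia.
  lia.
(* 2 is the only inner neighbour of 1, so f 2 is the only inner neighbour of f 1 *)
have nbr c : 0 < c < n -> skel_edge n (f 1) c -> c = f 2.
  move=> c_inner; have /f_onto[a a_le fa] : c <= n by lia.
  subst c; have a0 : a <> 0 by move=> a0; move: c_inner; rewrite a0 f0.
  have an : a <> n by move=> an; move: c_inner; rewrite an fn ltnn andbF.
  rewrite f_edge ?(ltnW (ltnW n_gt2)) // /skel_edge => a_1.
  by have -> : a = 2 by lia.
have := nbr (f 1).-1; have := nbr (f 1).+1; rewrite /skel_edge; lia.
Qed.

Lemma fixed_path : f 0 = 0 -> f 1 = 1 -> f n = n -> forall a, a <= n -> f a = a.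
Proof.
have [_ f_inj _ f_edge] := f_aut.
move=> f0 f1 fn.
suff fix_upto k : k <= n -> forall a, a <= k -> f a = a.
  by move=> a a_le; apply: fix_upto a_le a (leqnn a).
elim: k => [_ a|k IH k_lt a]; first by rewrite leqn0 => /eqP->.
have {}IH := IH (ltnW k_lt).
rewrite leq_eqVlt ltnS => /orP[/eqP->|]; last exact: IH.
have [->|k_gt0] := posnP k; first exact: f1.
have [->|k1_lt] := eqVneq k.+1 n; first exact: fn.
have ne c : c <= n -> c != k.+1 -> f k.+1 != f c.
  by move=> c_le; apply: contra_neq => /(f_inj _ _ k_lt c_le) ->.
have := f_edge k k.+1 (ltnW k_lt) k_lt.
have := ne 0; have := ne n; have := ne k.-1.
rewrite (IH k) // (IH k.-1) ?leq_pred // f0 fn /skel_edge; lia.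
Qed.

End SkeletonAutomorphism.

Definition perm_nat n (s : {perm 'I_n.+1}) (a : nat) : nat := s (inord a).

Lemma perm_nat_le n (s : {perm 'I_n.+1}) a : perm_nat s a <= n.
Proof. exact: leq_ord. Qed.

Lemma perm_natM n (s t : {perm 'I_n.+1}) a :
  perm_nat (s * t)%g a = perm_nat t (perm_nat s a).
Proof. by rewrite /perm_nat permM inord_val. Qed.

Lemma perm_nat_eq1 n (s : {perm 'I_n.+1}) :
  (forall a, a <= n -> perm_nat s a = a) -> s = 1%g.
Proof.
move=> s_id; apply/permP => x; apply/val_inj.
by rewrite perm1; have := s_id x (leq_ord x); rewrite /perm_nat inord_val.
Qed.

Lemma inord_inj n a b : a <= n -> b <= n -> inord a = inord b :> 'I_n.+1 -> a = b.
Proof. by move=> a_le b_le /(congr1 (@nat_of_ord _)); rewrite !inordK. Qed.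

Lemma perm_nat_inj n (s : {perm 'I_n.+1}) a b :
  a <= n -> b <= n -> perm_nat s a = perm_nat s b -> a = b.
Proof. by move=> a_le b_le /val_inj/perm_inj/inord_inj; apply. Qed.

Lemma perm_nat_skel_aut n (s : {perm 'I_n.+1}) :
  1 < n -> s \in AutK n.+1 -> skel_aut n (perm_nat s).
Proof.
move=> n_gt1 sK; split=> [a _|a b a_le b_le|c c_le|a b a_le b_le].
- exact: perm_nat_le.
- exact: perm_nat_inj.
- exists ((s^-1)%g (inord c) : 'I_n.+1); first exact: leq_ord.
  by rewrite /perm_nat inord_val permKV inordK.
have [ab|ab] := eqVneq a b; first by rewrite ab /skel_edge !eqxx.
have xy : inord a != inord b :> 'I_n.+1 by apply: contra_neq ab => /inord_inj; apply.
rewrite /perm_nat -inK_pair ?(inj_eq perm_inj) //.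
rewrite -[in RHS](inordK (a_le : a < n.+1)) -[in RHS](inordK (b_le : b < n.+1)).
rewrite -inK_pair //; move: sK; rewrite inE => /forallP/(_ [set inord a; inord b])/eqP.
by rewrite imsetU1 imset_set1.
Qed.

Lemma AutK_universal n (s : {perm 'I_n.+1}) c : 1 < n -> s \in AutK n.+1 ->
  c <= n -> universal n c -> universal n (perm_nat s c).
Proof. by move=> n_gt1 sK; apply/universal_map/perm_nat_skel_aut. Qed.

Lemma AutK_endpoints n (s : {perm 'I_n.+1}) c : 4 < n -> s \in AutK n.+1 ->
  c \in [:: 0; n] -> perm_nat s c \in [:: 0; n].
Proof.
move=> n_gt4 sK c_end; have c_le : c <= n by move: c_end; rewrite !inE; lia.
rewrite -universal_endpoints ?perm_nat_le //.
by apply: AutK_universal => //; [lia | apply/universal_endpoints].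
Qed.

Lemma AutK_even5 (s : {perm 'I_5}) c : s \in AutK 5 ->
  c \in [:: 0; 2; 4] -> perm_nat s c \in [:: 0; 2; 4].
Proof.
move=> sK c_even; have c_le : c <= 4 by move: c_even; rewrite !inE; lia.
rewrite -universal_even5 ?perm_nat_le //.
by apply: AutK_universal => //; apply/universal_even5.
Qed.

Section LabelPerm.

Variables (n : nat) (f : nat -> nat).
Hypothesis f_range : forall a, a <= n -> 0 < f a.+1 <= n.+1.
Hypothesis f_inj : forall a b, a <= n -> b <= n -> f a.+1 = f b.+1 -> a = b.

Definition lab_fun (x : 'I_n.+1) : 'I_n.+1 := inord (f x.+1).-1.

Lemma lab_funE x : lab_fun x = (f x.+1).-1 :> nat.
Proof. by rewrite inordK //; have := f_range (leq_ord x); lia. Qed.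

Lemma lab_fun_inj : injective lab_fun.
Proof.
move=> x y /(congr1 (@nat_of_ord _)); rewrite !lab_funE => fxy.
apply/ord_inj/f_inj; rewrite ?leq_ord //.
have := f_range (leq_ord x); have := f_range (leq_ord y); lia.
Qed.

Definition lab_perm : {perm 'I_n.+1} := perm lab_fun_inj.

Lemma lab_permE a : a <= n -> perm_nat lab_perm a = (f a.+1).-1.
Proof. by move=> a_le; rewrite /perm_nat permE lab_funE inordK. Qed.

Lemma lab_perm_mem : lab_perm \in perm_of_lab n.+1 f.
Proof.
rewrite inE; apply/forallP => x; rewrite permE lab_funE.
by have := f_range (leq_ord x); case: (f x.+1).
Qed.

End LabelPerm.

Lemma sigma_range n a : a <= n -> 0 < sigma_lab n.+1 a.+1 <= n.+1.
Proof. rewrite /sigma_lab; lia. Qed.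

Lemma sigma_inj n a b :
  a <= n -> b <= n -> sigma_lab n.+1 a.+1 = sigma_lab n.+1 b.+1 -> a = b.
Proof. rewrite /sigma_lab; lia. Qed.

Lemma tau_range n a : a <= n -> 0 < tau_lab n.+1 a.+1 <= n.+1.
Proof. by rewrite /tau_lab; repeat case: ifP; lia. Qed.

Lemma tau_inj n a b :
  a <= n -> b <= n -> tau_lab n.+1 a.+1 = tau_lab n.+1 b.+1 -> a = b.
Proof. by rewrite /tau_lab; repeat case: ifP; lia. Qed.

Lemma rho5_range a : a <= 4 -> 0 < rho5_lab a.+1 <= 5.
Proof. by case: a => [|[|[|[|[]]]]]. Qed.

Lemma rho5_inj a b : a <= 4 -> b <= 4 -> rho5_lab a.+1 = rho5_lab b.+1 -> a = b.
Proof. by case: a => [|[|[|[|[]]]]]; case: b => [|[|[|[|[]]]]]. Qed.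

Definition sigma_perm n := lab_perm (@sigma_range n) (@sigma_inj n).
Definition tau_perm n := lab_perm (@tau_range n) (@tau_inj n).
Definition rho5_perm := lab_perm rho5_range rho5_inj.

Lemma perm_nat_sigma n a : a <= n -> perm_nat (sigma_perm n) a = n - a.
Proof. by move=> a_le; rewrite lab_permE // /sigma_lab; lia. Qed.

Lemma perm_nat_tau n a : a <= n ->
  perm_nat (tau_perm n) a = if a == 0 then n else if a == n then 0 else a.
Proof. by move=> a_le; rewrite lab_permE // /tau_lab; repeat case: ifP; lia. Qed.

Lemma perm_nat_rho5 a : a <= 4 -> perm_nat rho5_perm a = (rho5_lab a.+1).-1.
Proof. exact: lab_permE. Qed.

Lemma AutK_sub_gen_big n : 4 < n ->
  AutK n.+1 \subset
  <<perm_of_lab n.+1 (sigma_lab n.+1) :|: perm_of_lab n.+1 (tau_lab n.+1)>>%g.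
Proof.
move=> n_gt4; set H := <<_>>%g; have n_gt1 : 1 < n by lia.
have sigmaH : sigma_perm n \in H by rewrite mem_gen // inE lab_perm_mem.
have tauH : tau_perm n \in H by rewrite mem_gen // inE lab_perm_mem orbT.
have HK g : g \in H -> g \in AutK n.+1.
  exact/subsetP/gen_sub_AutK/tau_maps_faces/sigma_maps_faces.
apply/subsetP => s sK.
wlog s0 : s sK / perm_nat s 0 = 0.
  move=> IH; move: (AutK_endpoints n_gt4 sK (mem_head 0 [:: n])).
  rewrite !inE => /orP[/eqP s0|/eqP s0]; first exact: IH.
  rewrite -(groupMr _ tauH); apply: IH; first exact: groupM sK (HK _ tauH).
  by rewrite perm_natM s0 perm_nat_tau // eqxx; case: ifP => //; lia.
have sn : perm_nat s n = n.
  move: (AutK_endpoints n_gt4 sK (mem_last 0 [:: n])).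
  rewrite !inE => /orP[/eqP sn|/eqP //].
  by have := perm_nat_inj (s := s) (leq0n n) (leqnn n); rewrite s0 sn; lia.
wlog s1 : s sK s0 sn / perm_nat s 1 = 1.
  move=> IH; have s_aut := perm_nat_skel_aut n_gt1 sK.
  case/orP: (second_vertex s_aut (ltnW (ltnW n_gt4)) s0 sn) => /eqP s1.
    exact: IH.
  have sigma_tau_H := groupM sigmaH tauH.
  rewrite -(groupMr _ sigma_tau_H); apply: IH; first exact: groupM sK (HK _ sigma_tau_H).
  1-3: rewrite !perm_natM ?s0 ?sn ?s1 perm_nat_sigma ?leq_pred // perm_nat_tau ?leq_subr //.
  1-3: by repeat case: ifP; lia.
by rewrite (perm_nat_eq1 (fixed_path (perm_nat_skel_aut n_gt1 sK) s0 s1 sn)) group1.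
Qed.

Lemma AutK5_sub_gen :
  AutK 5 \subset <<perm_of_lab 5 rho5_lab :|: perm_of_lab 5 (tau_lab 5)>>%g.
Proof.
set H := <<_>>%g.
have rhoH : rho5_perm \in H by rewrite mem_gen // inE lab_perm_mem.
have tauH : tau_perm 4 \in H by rewrite mem_gen // inE lab_perm_mem orbT.
have HK g : g \in H -> g \in AutK 5.
  exact/subsetP/gen_sub_AutK/tau_maps_faces/rho5_maps_faces.
have ne (s : {perm 'I_5}) a b :
    a <= 4 -> b <= 4 -> a != b -> perm_nat s a != perm_nat s b.
  by move=> a_le b_le; apply: contra_neq => /perm_nat_inj; apply.
apply/subsetP => s sK.
(* on the vertices 0..4, rho5_perm is the product of the cycles (0 2 4) and (1 3) *)
wlog s0 : s sK / perm_nat s 0 = 0.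
  move=> IH; move: (AutK_even5 (c := 0) sK isT).
  rewrite !inE => /or3P[/eqP s0|/eqP s0|/eqP s0]; first exact: IH.
  - have rho2_H := groupM rhoH rhoH.
    rewrite -(groupMr _ rho2_H); apply: IH; first exact: groupM sK (HK _ rho2_H).
    by rewrite !perm_natM s0 !perm_nat_rho5 ?perm_nat_le.
  - rewrite -(groupMr _ rhoH); apply: IH; first exact: groupM sK (HK _ rhoH).
    by rewrite !perm_natM s0 !perm_nat_rho5 ?perm_nat_le.
wlog s2 : s sK s0 / perm_nat s 2 = 2.
  move=> IH; move: (AutK_even5 (c := 2) sK isT) (ne s 2 0 isT isT isT).
  rewrite s0 !inE; case/or3P=> /eqP s2; rewrite s2 // => _; first exact: IH.
  have tau_rho_H := groupM tauH rhoH.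
  rewrite -(groupMr _ tau_rho_H); apply: IH; first exact: groupM sK (HK _ tau_rho_H).
    by rewrite !perm_natM s0 perm_nat_tau // !perm_nat_rho5 ?perm_nat_le.
  by rewrite !perm_natM s2 perm_nat_tau // !perm_nat_rho5 ?perm_nat_le.
have s4 : perm_nat s 4 = 4.
  move: (AutK_even5 (c := 4) sK isT) (ne s 4 0 isT isT isT) (ne s 4 2 isT isT isT).
  by rewrite s0 s2 !inE; lia.
wlog s1 : s sK s0 s2 s4 / perm_nat s 1 = 1.
  move=> IH; have := perm_nat_le s 1.
  move: (ne s 1 0 isT isT isT) (ne s 1 2 isT isT isT) (ne s 1 4 isT isT isT).
  rewrite s0 s2 s4 => s1_0 s1_2 s1_4 s1_le.
  have [s1|s1] : perm_nat s 1 = 1 \/ perm_nat s 1 = 3 by lia.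
    exact: IH.
  have rho3_H := groupM (groupM rhoH rhoH) rhoH.
  rewrite -(groupMr _ rho3_H); apply: IH; first exact: groupM sK (HK _ rho3_H).
  1-4: by rewrite !perm_natM ?s0 ?s1 ?s2 ?s4 !perm_nat_rho5 ?perm_nat_le.
by rewrite (perm_nat_eq1 (fixed_path (@perm_nat_skel_aut 4 s isT sK) s0 s1 s4)) group1.
Qed.

Theorem lemma5p3 :
  (forall m : nat, 5 < m ->
     AutK m = <<perm_of_lab m (sigma_lab m) :|: perm_of_lab m (tau_lab m)>>%g) /\
  AutK 5 = <<perm_of_lab 5 rho5_lab :|: perm_of_lab 5 (tau_lab 5)>>%g.
Proof.
split=> [[|n] // n_gt4|]; apply/eqP; rewrite eqEsubset.
  by rewrite AutK_sub_gen_big // gen_sub_AutK ?sigma_maps_faces ?tau_maps_faces.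
by rewrite AutK5_sub_gen gen_sub_AutK ?rho5_maps_faces ?tau_maps_faces.
Qed.
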